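(* Let $S[1..n]$ be a string and $1\le x\le y\le n$. If a longest repeat $\mathrm{LR}_x^y$ exists, then every choice of $\mathrm{LR}_x^y$ is a useful LLR, i.e., it equals $\mathrm{LLR}_k$ for some position $k$, and it is not a substring of any other LLR.
   Context: For $1\le i\le j\le n$, $S[i..j]=S[i]\cdots S[j]$. A substring $S[i..j]$ covers $[x..y]$ if $i\le x\le y\le j$. A substring $S[i..j]$ is unique if there is no other substring $S[i'..j']$ with $S[i'..j']=S[i..j]$ and $i'\ne i$; it is a repeat otherwise. $\mathrm{LR}_x^y$ is a repeat $S[i..j]$ covering $[x..y]$ such that no repeat $S[i'..j']$ covering $[x..y]$ has $j'-i'>j-i$. The left-bounded longest repeat starting at position $k$, $\mathrm{LLR}_k$, is a repeat $S[k..j]$ such that either $j=n$ or $S[k..j+1]$ is unique (it exists iff $S[k]$ is a repeat, and is then unique as an occurrence). An LLR is useless if it is a substring (as a position interval: contained in the position interval) of another LLR; otherwise it is useful. *)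

(* Strings are sequences over an eqType alphabet; positions
   are 1-based: S[1..n] with n = size S. *)
From mathcomp Require Import all_boot.
Set Implicit Arguments. Unset Strict Implicit. Unset Printing Implicit Defensive.

Section Strings.
Variable T : eqType.

Definition substr (s : seq T) (i j : nat) : seq T :=
  take (j.+1 - i) (drop i.-1 s).

Definition valid (s : seq T) (i j : nat) : Prop :=
  1 <= i /\ i <= j /\ j <= size s.

Definition covers (i j x y : nat) : Prop := i <= x /\ x <= y /\ y <= j.

Definition unique_occ (s : seq T) (i j : nat) : Prop :=
  valid s i j /\
  ~ (exists i' j', valid s i' j' /\ substr s i' j' = substr s i j /\ i' <> i).

Definition repeat_occ (s : seq T) (i j : nat) : Prop :=
  valid s i j /\ ~ unique_occ s i j.

Definition is_LR (s : seq T) (x y i j : nat) : Prop :=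
  repeat_occ s i j /\ covers i j x y /\
  forall i' j', repeat_occ s i' j' -> covers i' j' x y -> j' - i' <= j - i.

Definition is_LLR (s : seq T) (k j : nat) : Prop :=
  repeat_occ s k j /\ (j = size s \/ unique_occ s k j.+1).

Definition useful_LLR (s : seq T) (k j : nat) : Prop :=
  is_LLR s k j /\
  forall k' j', is_LLR s k' j' -> (k', j') <> (k, j) -> ~ (k' <= k /\ j <= j').

End Strings.

From mathcomp Require Import all_boot.
From mathcomp Require Import zify.

(* An LR is already as long as any repeat covering [x..y].  Extending it by one
   position keeps [x..y] covered, so the extension cannot be a repeat, i.e. the
   LR is left-bounded longest at its start; and any LLR containing it is a
   covering repeat at least as long, hence has the same position interval. *)

Section LongestRepeats.
Variable T : eqType.
Implicit Types (s : seq T) (i j k l x y : nat).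

Lemma covers_widen {i j k l x y} :
  k <= i -> j <= l -> covers i j x y -> covers k l x y.
Proof. by rewrite /covers; lia. Qed.

Lemma repeat_occ_valid {s i j} : repeat_occ s i j -> valid s i j.
Proof. by case. Qed.

Lemma LR_extension_unique {s x y i j} :
  is_LR s x y i j -> j < size s -> unique_occ s i j.+1.
Proof.
move=> [[[Vi [Vij _]] _] [Cij Hmax]] lt_j_n.
have Vext : valid s i j.+1 by rewrite /valid; lia.
split=> // other_occ.
have Rext : repeat_occ s i j.+1 by split=> // -[_]; apply.
have := Hmax _ _ Rext (covers_widen (leqnn i) (leqnSn j) Cij).
lia.
Qed.

Lemma LR_is_LLR {s x y i j} : is_LR s x y i j -> is_LLR s i j.
Proof.
move=> LR; have [[[_ [_ le_j_n]] _] _] := LR.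
split; first by case: LR.
have [eq_j_n | lt_j_n] : j = size s \/ j < size s by lia.
  by left.
by right; apply: LR_extension_unique LR lt_j_n.
Qed.

Lemma LR_maximal_interval {s x y i j k l} :
  is_LR s x y i j -> repeat_occ s k l -> k <= i -> j <= l -> (k, l) = (i, j).
Proof.
move=> [[[_ [Vij _]] _] [Cij Hmax]] Rkl le_k_i le_j_l.
have [_ [Vkl _]] := repeat_occ_valid Rkl.
have := Hmax _ _ Rkl (covers_widen le_k_i le_j_l Cij).
by move=> le_len; congr pair; lia.
Qed.

Lemma LR_useful_LLR {s x y i j} : is_LR s x y i j -> useful_LLR s i j.
Proof.
move=> LR; split; first exact: LR_is_LLR LR.
move=> k l [Rkl _] ne_kl [le_k_i le_j_l].
exact: ne_kl (LR_maximal_interval LR Rkl le_k_i le_j_l).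
Qed.

End LongestRepeats.

Theorem lemma3 (T : eqType) (s : seq T) (x y : nat) :
  1 <= x -> x <= y -> y <= size s ->
  forall i j, is_LR s x y i j ->
    (exists k, k = i /\ is_LLR s k j) /\ useful_LLR s i j.
Proof.
move=> _ _ _ i j LR.
split; first by exists i; split; last exact: LR_is_LLR LR.
exact: LR_useful_LLR LR.
Qed.
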